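(* For every integer $n\ge0$ with $n\neq1$, $$B_n=\frac{1}{2-2^n}\sum_{K=0}^{\lfloor n/2\rfloor}(-1)^K\sum_{\substack{1\le q_1,\dots,q_K\le\lfloor n/2\rfloor\\ 2q_1+\cdots+2q_K=n}}\frac{1}{(2q_1+1)\cdots(2q_K+1)}\,\frac{n!}{(2q_1)!\cdots(2q_K)!}.$$
   Context: The Bernoulli numbers $B_n$ are defined by $\sum_{n\ge0}B_nz^n/n!=z/(e^z-1)$. The inner sum is over ordered $K$-tuples (the $K=0$ term is the empty tuple, which contributes $1$ exactly when $n=0$). *)

From mathcomp Require Import all_boot all_order all_algebra.
Set Implicit Arguments. Unset Strict Implicit. Unset Printing Implicit Defensive.
Import Order.TTheory GRing.Theory Num.Theory.
Local Open Scope ring_scope.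

(* B : nat -> rat is the sequence of Bernoulli numbers, i.e.
   \sum_n B_n z^n / n! = z / (e^z - 1) as formal power series.
   Equivalently (multiplying out), (\sum_n B_n z^n/n!) * ((e^z - 1)/z) = 1,
   where (e^z - 1)/z = \sum_m z^m/(m+1)!; comparing coefficients of z^n: *)
Definition bernoulli_gf (B : nat -> rat) : Prop :=
  forall n : nat,
    \sum_(k < n.+1) B k / (k`!)%:R / ((n - k).+1`!)%:R = (n == 0%N)%:R.

(* Let beta(z) = z/(e^z - 1) = \sum_n B_n z^n/n!.  Then
   2 beta(z) - beta(2z) = 2z e^z/(e^{2z} - 1) = z/sinh z, whose coefficients are
   (2 - 2^n) B_n/n!.  Writing sinh z/z = 1 + P with P = \sum_{q>=1} z^{2q}/(2q+1)!,
   we get z/sinh z = \sum_K (-P)^K, and P^K has order 2K, so only K <= n/2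
   contribute to the coefficient of z^n; expanding P^K over ordered K-tuples gives
   the formula.  Power series are represented by polynomials truncated below z^N,
   so "equal as power series up to order N" reads ['X^N %| p - q]. *)

From mathcomp Require Import all_boot all_order all_algebra.
From mathcomp Require Import ring.
Import Order.TTheory GRing.Theory Num.Theory.
Local Open Scope ring_scope.

Lemma dvdXnP (R : fieldType) N (p : {poly R}) :
  reflect (forall i, (i < N)%N -> p`_i = 0) ('X^N %| p).
Proof.
rewrite -[X in reflect _ X]/(p %% _ == 0).
rewrite -Pdiv.IdomainMonic.take_poly_modp ?monicXn //.
apply: (iffP eqP) => [p0 i ltiN | p0].
  by have := coef_take_poly N p i; rewrite p0 coef0 ltiN => <-.
by apply/polyP => i; rewrite coef_take_poly coef0; case: ltnP => // /p0.
Qed.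

Lemma dvdp_inverse_uniq (R : idomainType) (d a b s : {poly R}) :
  d %| a * s - 1 -> d %| b * s - 1 -> d %| a - b.
Proof.
move=> das dbs; have -> : a - b = b * (a * s - 1) - a * (b * s - 1) by ring.
by rewrite dvdp_sub ?dvdp_mull.
Qed.

Lemma dvdp_geometric_inv (R : idomainType) (d x : {poly R}) M :
  d %| x ^+ M -> d %| (\sum_(i < M) (- x) ^+ i) * (1 + x) - 1.
Proof.
move=> dx; have -> : (\sum_(i < M) (- x) ^+ i) * (1 + x) - 1 = - ((- x) ^+ M - 1) - 1.
  by rewrite subrX1; ring.
by rewrite opprB addrAC subrr add0r dvdpNr exprNn dvdp_mull.
Qed.

Lemma coef_poly_mul (R : comNzRingType) N (a b : nat -> R) i : (i < N)%N ->
  (\poly_(j < N) a j * \poly_(j < N) b j)`_i = \sum_(j < i.+1) a j * b (i - j)%N.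
Proof.
move=> ltiN; rewrite coefM; apply: eq_bigr => j _.
by rewrite !coef_poly !(leq_ltn_trans _ ltiN) ?leq_subr // -ltnS.
Qed.

Lemma coef_even_sum (R : nzRingType) M (a : nat -> R) i :
  (\sum_(q < M) a q *: 'X^(q.*2))`_i =
    if ~~ odd i && (i./2 < M)%N then a i./2 else 0.
Proof.
rewrite coef_sum; have [oi|ei] /= := boolP (odd i).
  rewrite big1 // => q _; rewrite coefZ coefXn.
  by case: eqP => [iq|]; [move: oi; rewrite iq odd_double | rewrite mulr0].
rewrite -(big_ord1_eq +%R a) [RHS]big_mkcond; apply: eq_bigr => q _.
rewrite coefZ coefXn -{1}(even_halfK ei) (can_eq doubleK) eq_sym.
by case: eqP; rewrite ?mulr1 ?mulr0.
Qed.

Lemma coef_sum_monomials_exp (R : comNzRingType) m (a : 'I_m -> R)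
    (e : 'I_m -> nat) K k :
  ((\sum_(j < m) a j *: 'X^(e j)) ^+ K)`_k =
  \sum_(f : {ffun 'I_K -> 'I_m} | (\sum_(i < K) e (f i))%N == k)
    \prod_(i < K) a (f i).
Proof.
rewrite -[K in LHS]card_ord -prodr_const bigA_distr_bigA coef_sum [RHS]big_mkcond.
apply: eq_bigr => f _; under eq_bigr => i _ do rewrite -mul_polyC.
rewrite big_split /= -rmorph_prod prodrXr coefCM coefXn eq_sym.
by case: eqP; rewrite ?mulr1 ?mulr0.
Qed.

Lemma fact_neq0 (R : numDomainType) k : (k`!%:R : R) != 0.
Proof. by rewrite pnatr_eq0 -lt0n fact_gt0. Qed.

Lemma prod_factS_inv (R : fieldType) K (s : 'I_K -> nat) (x : R) :
  (\prod_(i < K) (s i).+1%:R)^-1 * (x / (\prod_(i < K) (s i)`!)%:R) =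
  x * \prod_(i < K) ((s i).+1`!%:R)^-1.
Proof.
rewrite natr_prod -!prodfV mulrCA; congr (_ * _).
by rewrite -big_split; apply: eq_bigr => i _; rewrite factS natrM invfM.
Qed.

Section TruncatedExponential.
Context {R : numFieldType} (N : nat).

Definition expT (c : R) : {poly R} := \poly_(i < N) (c ^+ i / i`!%:R).
Definition expm1T (c : R) : {poly R} := \poly_(i < N) (c ^+ i.+1 / i.+1`!%:R).

Lemma expT_mul a b : 'X^N %| expT a * expT b - expT (a + b).
Proof.
apply/dvdXnP => i ltiN; rewrite coefB coef_poly_mul // coef_poly ltiN.
rewrite (addrC a b) exprDn mulr_suml; apply/eqP; rewrite subr_eq0; apply/eqP.
apply: eq_bigr => j _; have leji : (j <= i)%N by rewrite -ltnS.
have /esym/(congr1 (GRing.natmul (1 : R))) := bin_fact leji; rewrite !natrM => ->.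
have binn0 : ('C(i, j)%:R : R) != 0 by rewrite pnatr_eq0 -lt0n bin_gt0.
by rewrite -mulr_natr; field; rewrite binn0 !fact_neq0.
Qed.

Lemma expT0 : 'X^N %| expT 0 - 1.
Proof.
apply/dvdXnP => i ltiN; rewrite coefB coef_poly ltiN coef1 expr0n.
by case: i {ltiN} => [|i]; rewrite ?fact0 ?divr1 ?mul0r subrr.
Qed.

Lemma X_expm1T c : 'X^N %| 'X * expm1T c - (expT c - 1).
Proof.
apply/dvdXnP => -[|i] ltiN; rewrite coefB coefXM coefB coef1 /=.
  by rewrite coef_poly ltiN fact0 divr1 !subrr.
by rewrite !coef_poly ltiN ltnW // subr0 subrr.
Qed.

End TruncatedExponential.

Definition sinhc {R : numFieldType} (M : nat) : {poly R} :=
  \sum_(q < M) ((q.*2.+1)`!%:R)^-1 *: 'X^(q.*2).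

Definition sinhc_tail {R : numFieldType} (m : nat) : {poly R} :=
  \sum_(q < m) ((q.+1.*2.+1)`!%:R)^-1 *: 'X^(q.+1.*2).

Lemma X_sinhc {R : numFieldType} N M : (N <= M.*2.+1)%N ->
  'X^N %| 2 * ('X * sinhc M) - (expT N 1 - expT N (-1) : {poly R}).
Proof.
move=> leNM; apply/dvdXnP => -[|i] ltiN.
  by rewrite coefB mulr_natl coefMn coefXM coefB !coef_poly ltiN subrr mul0rn subrr.
rewrite coefB mulr_natl coefMn coefXM coefB /= /sinhc.
rewrite (coef_even_sum _ _ (fun q => ((q.*2.+1)`!%:R)^-1)) !coef_poly ltiN.
rewrite expr1n -signr_odd /=.
have [oi|ei] /= := boolP (odd i); first by rewrite mul0rn expr0 !subrr.
rewrite ltn_half_double -ltnS (leq_trans ltiN) // even_halfK //.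
by rewrite expr1 mulNr opprK div1r -mulr2n subrr.
Qed.

Lemma sinhc_recl (R : numFieldType) m :
  sinhc m.+1 = 1 + sinhc_tail m :> {poly R}.
Proof. by rewrite /sinhc big_ord_recl /= invr1 scale1r expr0. Qed.

Lemma dvdX2_sinhc_tail (R : numFieldType) m : 'X^2 %| (sinhc_tail m : {poly R}).
Proof.
apply/dvdXnP => i lti2; rewrite coef_sum big1 // => q _.
by rewrite coefZ coefXn (ltn_eqF (leq_trans lti2 _)) ?mulr0.
Qed.

Lemma dvdX_sinhc_tail_exp (R : numFieldType) n :
  'X^(n.+1) %| (sinhc_tail n./2 : {poly R}) ^+ (n./2).+1.
Proof.
apply: dvdp_trans (dvdp_exp2r _ (dvdX2_sinhc_tail _ _)).
by rewrite -exprM dvdp_exp2l // mul2n -ltn_half_double.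
Qed.

Section Bernoulli.
Variable B : nat -> rat.
Hypothesis HB : bernoulli_gf B.

Definition bernT N (c : rat) : {poly rat} := \poly_(i < N) (c ^+ i * (B i / i`!%:R)).

Lemma bernT_expm1T N c : 'X^N %| bernT N c * expm1T N c - c%:P.
Proof.
apply/dvdXnP => i ltiN; rewrite coefB coef_poly_mul // coefC.
rewrite (eq_bigr (fun j : 'I_i.+1 => c ^+ i.+1 * (B j / j`!%:R / (i - j).+1`!%:R))).
  by rewrite -mulr_sumr HB; case: i {ltiN} => [|i]; rewrite ?expr1 ?mulr1 ?mulr0 subrr.
by move=> j _; rewrite mulrACA -exprD addnS subnKC ?leq_ord.
Qed.

(* 2 beta(z) - beta(2z) = z / sinh z, cleared of denominators: the right-hand side
   below is an explicit combination of the truncation errors of the lemmas above. *)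
Lemma bernT_sinhc N M : (N <= M.*2.+1)%N ->
  'X^N %| (2 * bernT N 1 - bernT N 2) * (2 * ('X * sinhc M)) - 2 * 'X.
Proof.
move=> leNM.
set B1 := bernT N 1; set B2 := bernT N 2; set S := sinhc M.
set E1 := expm1T N (1 : rat); set E2 := expm1T N (2 : rat).
set Y1 := expT N (1 : rat); set Y2 := expT N (2 : rat); set Ym := expT N (-1 : rat).
have R1 : 'X^N %| B1 * E1 - 1 by rewrite -polyC1 bernT_expm1T.
have R2 : 'X^N %| B2 * E2 - 2.
  by rewrite -[X in _ - X](rmorph_nat (@polyC rat) 2) bernT_expm1T.
have R3 : 'X^N %| 'X * E1 - (Y1 - 1) := X_expm1T N 1.
have R4 : 'X^N %| 'X * E2 - (Y2 - 1) := X_expm1T N 2.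
have R5 : 'X^N %| 2 * ('X * S) - (Y1 - Ym) := X_sinhc _ _ leNM.
have R6 : 'X^N %| Y1 * Ym - 1.
  have := dvdp_add (expT_mul N (1 : rat) (-1)) (expT0 N).
  by rewrite addrN addrA subrK.
have R7 : 'X^N %| Y1 * Y1 - Y2 := expT_mul N 1 1.
set D := 2 * B1 - B2; set G := D * (2 * ('X * S)) - 2 * 'X.
have -> : G = - (G * (Y1 * Ym - 1)) + Ym * (Y1 * D * (2 * ('X * S) - (Y1 - Ym))
   + D * (Y1 * Y1 - Y2) - D * (Y1 * Ym - 1)
   + (2 * 'X * (Y1 + 1)) * (B1 * E1 - 1) - (2 * B1 * (Y1 + 1)) * ('X * E1 - (Y1 - 1))
   - (2 * B1) * (Y1 * Y1 - Y2) - 'X * (B2 * E2 - 2) + B2 * ('X * E2 - (Y2 - 1))).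
  by rewrite /G /D; ring.
by repeat first
  [assumption | apply: dvdp_add | apply: dvdp_sub | rewrite dvdpNr | apply: dvdp_mull].
Qed.

Lemma bernT_sinhc_inv n M : (n.+2 <= M.*2.+1)%N ->
  'X^(n.+1) %| (2 * bernT n.+2 1 - bernT n.+2 2) * sinhc M - 1.
Proof.
move=> leNM; have := bernT_sinhc _ _ leNM.
set D := 2 * _ - _; set S := sinhc M.
have -> : D * (2 * ('X * S)) - 2 * 'X = 'X * ((D * S - 1) *+ 2).
  by rewrite mulr2n; ring.
by rewrite exprS dvdp_mul2l ?polyX_eq0 // -scaler_nat dvdpZr ?pnatr_eq0.
Qed.

Lemma bernoulli_alternating_sum n :
  (2 - 2 ^+ n) * (B n / n`!%:R) =
  \sum_(K < (n./2).+1) (-1) ^+ K *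
    \sum_(q : {ffun 'I_K -> 'I_(n./2)} | (\sum_(i < K) (q i).+1.*2)%N == n)
      \prod_(i < K) ((q i).+1.*2.+1`!%:R)^-1.
Proof.
set m := n./2; set D := 2 * bernT n.+2 1 - bernT n.+2 2.
pose Q : {poly rat} := \sum_(K < m.+1) (- sinhc_tail m) ^+ K.
have hD : 'X^(n.+1) %| D * sinhc m.+1 - 1.
  by apply: bernT_sinhc_inv; rewrite doubleS !ltnS -leq_half_double.
have hQ : 'X^(n.+1) %| Q * sinhc m.+1 - 1.
  by rewrite sinhc_recl; apply/dvdp_geometric_inv/dvdX_sinhc_tail_exp.
have -> : (2 - 2 ^+ n) * (B n / n`!%:R) = D`_n.
  by rewrite coefB mulr_natl coefMn !coef_poly ltnW // expr1n mul1r mulrBl mulr_natl.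
have /dvdXnP /(_ n (ltnSn n)) := dvdp_inverse_uniq _ _ _ _ _ hD hQ.
rewrite coefB => /eqP; rewrite subr_eq0 => /eqP ->.
rewrite coef_sum; apply: eq_bigr => K _.
rewrite (exprNn (sinhc_tail m)) -!(signr_odd _ K) /sinhc_tail.
rewrite -(@coef_sum_monomials_exp _ _ (fun q : 'I_m => ((q.+1.*2.+1)`!%:R)^-1)
                                      (fun q : 'I_m => q.+1.*2)).
by case: (odd K); rewrite ?mul1r ?mulN1r ?coefN.
Qed.

End Bernoulli.

Theorem mainTheorem4 (B : nat -> rat) (HB : bernoulli_gf B) (n : nat) :
  n != 1%N ->
  B n = (2 - 2 ^+ n)^-1 *
    \sum_(K < (n./2).+1)
      (-1) ^+ K *
      \sum_(q : {ffun 'I_K -> 'I_(n./2)} | (\sum_(i < K) (q i).+1.*2)%N == n)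
        ((\prod_(i < K) ((q i).+1.*2.+1)%:R)^-1 *
         ((n`!)%:R / (\prod_(i < K) ((q i).+1.*2)`!)%:R)).
Proof.
move=> n_neq1.
have n2_neq0 : (2 - 2 ^+ n : rat) != 0.
  by rewrite subr_eq0 -natrX eqr_nat -[X in X == _]expn1 eqn_exp2l // eq_sym.
under eq_bigr => K _ do under eq_bigr => q _ do rewrite prod_factS_inv.
under eq_bigr => K _ do rewrite -mulr_sumr mulrCA.
rewrite -mulr_sumr -(bernoulli_alternating_sum _ HB).
by field; rewrite n2_neq0 fact_neq0.
Qed.
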